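(* Let $\Omega\subset\mathbb{R}^n$ be an open set, $K\subset\Omega$ a non-empty compact set, and $\lambda>0$. Let $\chi_K:\mathbb{R}^n\to\{0,1\}$ be the characteristic function of $K$ and $\chi_K^\Omega$ its restriction to $\overline\Omega$. If $\mathrm{dist}^2(K,\partial\Omega)>1/\lambda$, then for every $x\in\overline\Omega$, $$M^{\lambda}_{\Omega}(\chi_K^\Omega)(x)=M^\lambda(\chi_K)(x),\qquad M_{\lambda,\Omega}(M^{\lambda}_{\Omega}(\chi_K^\Omega))(x)=M_\lambda(M^\lambda(\chi_K))(x),$$ and consequently, setting $C^u_{\lambda,\Omega}(\chi_K^\Omega)(x)=M_{\lambda,\Omega}(M^{\lambda}_{\Omega}(\chi_K^\Omega))(x)$, we have $C^u_{\lambda,\Omega}(\chi_K^\Omega)(x)=C^u_\lambda(\chi_K)(x)$.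
   Context: $\mathrm{dist}(K,\partial\Omega)=\inf\{|x-y|:x\in K,\,y\in\partial\Omega\}$. For bounded $g:\mathbb{R}^n\to\mathbb{R}$: $M_\lambda(g)(x)=\inf_{y\in\mathbb{R}^n}\{g(y)+\lambda|y-x|^2\}$, $M^\lambda(g)(x)=\sup_{y\in\mathbb{R}^n}\{g(y)-\lambda|y-x|^2\}$. For bounded $g:\overline\Omega\to\mathbb{R}$ and $x\in\overline\Omega$: $M_{\lambda,\Omega}(g)(x)=\inf_{y\in\overline\Omega}\{g(y)+\lambda|y-x|^2\}$, $M^{\lambda}_{\Omega}(g)(x)=\sup_{y\in\overline\Omega}\{g(y)-\lambda|y-x|^2\}$. The upper compensated convex transform is $C^u_\lambda(g)(x)=\lambda|x|^2-\mathrm{co}[\lambda|\cdot|^2-g](x)$, with $\mathrm{co}$ the convex envelope. *)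

From HB Require Import structures.
From mathcomp Require Import all_boot all_order all_algebra.
From mathcomp Require Import all_classical all_reals all_analysis.
Set Implicit Arguments. Unset Strict Implicit. Unset Printing Implicit Defensive.
Import Order.TTheory GRing.Theory Num.Theory.
Import numFieldNormedType.Exports.
Local Open Scope classical_set_scope.
Local Open Scope ring_scope.

Section Defs.
Variables (R : realType) (n : nat).
Notation V := 'rV[R]_n.

Definition sqnorm (x : V) : R := \sum_(i < n) (x ord0 i) ^+ 2.
Definition enorm (x : V) : R := Num.sqrt (sqnorm x).

Definition boundary (A : set V) : set V := closure A `\` interior A.

(* dist(K, B) = inf {|x - y| : x in K, y in B}, in extended reals (inf of empty = +oo) *)
Definition dist_sets (K B : set V) : \bar R :=
  ereal_inf [set ((enorm (x - y))%:E) | x in K & y in B].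

(* M_{lambda,D}(g)(x) = inf_{y in D} { g y + lambda |y - x|^2 } ;
   M_lambda = M_{lambda, R^n} (D = setT) *)
Definition Mlow (D : set V) (lam : R) (g : V -> R) (x : V) : R :=
  inf [set g y + lam * sqnorm (y - x) | y in D].

Definition Mup (D : set V) (lam : R) (g : V -> R) (x : V) : R :=
  sup [set g y - lam * sqnorm (y - x) | y in D].

Definition convex_fun (h : V -> R) : Prop :=
  forall (x y : V) (t : R), 0 <= t -> t <= 1 ->
    h (t *: x + (1 - t) *: y) <= t * h x + (1 - t) * h y.

Definition conv_env (f : V -> R) (x : V) : R :=
  sup [set h x | h in [set h : V -> R | convex_fun h /\ (forall y, h y <= f y)]].

Definition Cu (lam : R) (g : V -> R) (x : V) : R :=
  lam * sqnorm x - conv_env (fun y => lam * sqnorm y - g y) x.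

End Defs.

(* Restricting the supremum defining [M^lam chi_K] to [closure Omega], which
   contains [K], only drops competitors off [K]; these are [<= 0], while [x]
   itself already gives a value [>= 0].  Since [M^lam chi_K] vanishes at squared
   distance [> 1/lam] from [K], it vanishes on the boundary of [Omega], so in
   the infimum defining [M_lam] a point [y] outside [closure Omega] is beaten by
   the point where the segment from [x] to [y] leaves [closure Omega].  Finally
   [M_lam (M^lam g) = C^u_lam g] for every bounded [g]: [lam |.|^2 - M_lam (M^lam g)]
   is a supremum of affine functions lying below [lam |.|^2 - g], and every convex
   minorant of [lam |.|^2 - g] lies below it, as testing against an affine minorant
   through a subgradient shows.  Subgradients of a finite convex function on
   [R^n] are built one coordinate at a time, by a one-dimensional Hahn-Banach
   step. *)

From HB Require Import structures.
From mathcomp Require Import all_boot all_order all_algebra.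
From mathcomp Require Import all_classical all_reals all_analysis.
From mathcomp Require Import ring lra.
Import Order.TTheory GRing.Theory Num.Theory.
Import numFieldNormedType.Exports.
Local Open Scope classical_set_scope.
Local Open Scope ring_scope.
Set Implicit Arguments. Unset Strict Implicit. Unset Printing Implicit Defensive.

Section Dot.
Variables (R : realType) (n : nat).
Notation V := 'rV[R]_n.
Implicit Types (u v w : V).

Definition dot u v : R := \sum_(i < n) u ord0 i * v ord0 i.

Lemma dotC u v : dot u v = dot v u.
Proof. by apply: eq_bigr => i _; rewrite mulrC. Qed.

Lemma dotDl u v w : dot (u + v) w = dot u w + dot v w.
Proof. by rewrite /dot -big_split; apply: eq_bigr => i _; rewrite mxE mulrDl. Qed.

Lemma dotZl (a : R) u v : dot (a *: u) v = a * dot u v.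
Proof. by rewrite /dot mulr_sumr; apply: eq_bigr => i _; rewrite mxE mulrA. Qed.

Lemma dotBl u v w : dot (u - v) w = dot u w - dot v w.
Proof. by rewrite dotDl -scaleN1r dotZl mulN1r. Qed.

Lemma dotDr u v w : dot w (u + v) = dot w u + dot w v.
Proof. by rewrite dotC dotDl !(dotC w). Qed.

Lemma dotZr (a : R) u v : dot v (a *: u) = a * dot v u.
Proof. by rewrite dotC dotZl dotC. Qed.

Lemma dotBr u v w : dot w (u - v) = dot w u - dot w v.
Proof. by rewrite dotC dotBl !(dotC w). Qed.

Lemma dot0l v : dot 0 v = 0.
Proof. by rewrite /dot big1 // => i _; rewrite mxE mul0r. Qed.

Lemma dot_delta_mxl (k : 'I_n) v : dot (delta_mx ord0 k) v = v ord0 k.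
Proof.
rewrite /dot (bigD1 k) //= big1 ?addr0; first by rewrite mxE !eqxx mul1r.
by move=> i /negbTE ik; rewrite mxE ik andbF mul0r.
Qed.

Lemma sqnorm_dot v : sqnorm v = dot v v.
Proof. by apply: eq_bigr => i _; rewrite expr2. Qed.

Lemma sqnorm_ge0 v : 0 <= sqnorm v.
Proof. by apply: sumr_ge0 => i _; exact: sqr_ge0. Qed.

Lemma sqnorm0 : sqnorm (0 : V) = 0.
Proof. by rewrite sqnorm_dot dot0l. Qed.

Lemma sqnormB u v : sqnorm (u - v) = sqnorm u - 2 * dot u v + sqnorm v.
Proof. rewrite !sqnorm_dot dotBl !dotBr (dotC v u); ring. Qed.

Lemma sqnorm_distC u v : sqnorm (u - v) = sqnorm (v - u).
Proof. rewrite !sqnormB (dotC v u); ring. Qed.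

Lemma sqnormZ (a : R) v : sqnorm (a *: v) = a ^+ 2 * sqnorm v.
Proof. rewrite !sqnorm_dot dotZl dotZr; ring. Qed.

End Dot.

Section Subgradient.
Variables (R : realType) (n : nat).
Notation V := 'rV[R]_n.
Variables (phi : V -> R) (x : V).
Hypothesis phi_convex : convex_fun phi.

Section Extension.
Variables (W : set V) (q e : V).
Hypothesis W0 : W 0.
Hypothesis W_lin : forall a b w1 w2, W w1 -> W w2 -> W (a *: w1 + b *: w2).
Hypothesis q_subgrad : forall w, W w -> dot q w <= phi (x + w) - phi x.

Let gap w s := phi (x + w + s *: e) - phi x - dot q w.

Lemma gap_slope_le w w' s s' : W w -> W w' -> s < 0 -> 0 < s' ->
  gap w s / s <= gap w' s' / s'.
Proof.
move=> Ww Ww' s_lt0 s'_gt0.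
have d_gt0 : 0 < s' - s by lra.
pose a := s' / (s' - s); pose b := - s / (s' - s).
have a_ge0 : 0 <= a by rewrite divr_ge0 // ltW.
have a_le1 : a <= 1 by rewrite ler_pdivrMr // mul1r; lra.
have ba : 1 - a = b by rewrite /a /b; field; lra.
have cvx := phi_convex (x + w + s *: e) (x + w' + s' *: e) a_ge0 a_le1.
have mid : a *: (x + w + s *: e) + (1 - a) *: (x + w' + s' *: e)
          = x + (a *: w + b *: w').
  by rewrite ba; apply/rowP => i; rewrite !mxE /a /b; field; lra.
rewrite mid in cvx.
(* The weights [a], [b] make the [e]-components cancel: [a s + b s' = 0]. *)
have := q_subgrad (W_lin a b Ww Ww'); rewrite dotDr !dotZr => sub.
have comb : 0 <= a * gap w s + b * gap w' s'.
  by rewrite /gap -ba in sub cvx *; lra.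
have {comb} : 0 <= (s' - s) * (a * gap w s + b * gap w' s') by rewrite mulr_ge0 // ltW.
have -> : (s' - s) * (a * gap w s + b * gap w' s') = s' * gap w s - s * gap w' s'.
  by rewrite /a /b; field; lra.
by rewrite ler_ndivrMr // mulrAC ler_pdivrMr //; lra.
Qed.

Lemma subgradient_extend :
  exists c : R, forall w s, W w -> dot q w + s * c <= phi (x + w + s *: e) - phi x.
Proof.
pose L := [set y | exists w s, [/\ W w, s < 0 & y = gap w s / s]].
have L_ub : ubound L (gap 0 1 / 1).
  by move=> _ [w [s [Ww s_lt0 ->]]]; apply: gap_slope_le.
have L0 : L !=set0 by exists (gap 0 (-1) / (-1)), 0, (-1); split => //; lra.
exists (sup L) => w s Ww.
suff : s * sup L <= gap w s by rewrite /gap; lra.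
have [s_lt0|s_gt0|->] := ltgtP s 0.
- have : gap w s / s <= sup L by apply: ub_le_sup; [exists (gap 0 1 / 1) | exists w, s].
  by rewrite ler_ndivrMr // mulrC.
- have : sup L <= gap w s / s.
    by apply: ge_sup => // _ [w1 [s1 [Ww1 s1_lt0 ->]]]; exact: gap_slope_le.
  by rewrite ler_pdivlMr // mulrC.
- by rewrite mul0r /gap scale0r addr0; have := q_subgrad Ww; lra.
Qed.

End Extension.

Lemma convex_subgradient : exists q, forall v, dot q v <= phi (x + v) - phi x.
Proof.
pose W k : set V := [set v | forall j : 'I_n, (k <= j)%N -> v ord0 j = 0].
suff Wq k : (k <= n)%N -> exists q, forall v, W k v -> dot q v <= phi (x + v) - phi x.
  have [q Hq] := Wq n (leqnn n).
  by exists q => v; apply: Hq => j; rewrite leqNgt ltn_ord.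
elim: k => [_|k IH k_lt_n].
  exists 0 => v Wv; have -> : v = 0 by apply/rowP => j; rewrite mxE; apply: Wv.
  by rewrite dot0l addr0 subrr.
have [q Hq] := IH (ltnW k_lt_n).
pose kk : 'I_n := Ordinal k_lt_n.
pose e : V := delta_mx ord0 kk.
have W0 : W k 0 by move=> j _; rewrite mxE.
have W_lin a b w1 w2 : W k w1 -> W k w2 -> W k (a *: w1 + b *: w2).
  by move=> W1 W2 j kj; rewrite !mxE W1 // W2 // !mulr0 addr0.
have [c Hc] := subgradient_extend e W0 W_lin Hq.
exists (q + (c - dot q e) *: e) => v Wv.
pose s := v ord0 kk; pose w := v - s *: e.
have Ww : W k w.
  move=> j kj; rewrite !mxE; have [->|jk] := eqVneq j kk; first by rewrite !eqxx mulr1 subrr.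
  rewrite andbF mulr0 subr0; apply: Wv.
  by rewrite ltn_neqAle kj andbT; apply: contra jk => /eqP kj'; apply/eqP/val_inj.
have v_split : v = w + s *: e by rewrite subrK.
have := Hc w s Ww; rewrite -addrA -v_split dotDl dotZl dot_delta_mxl -/s.
have -> : dot q v = dot q w + s * dot q e by rewrite {1}v_split dotDr dotZr.
lra.
Qed.

End Subgradient.

Section Envelopes.
Variables (R : realType) (n : nat) (lam : R).
Hypothesis lam_gt0 : 0 < lam.
Notation V := 'rV[R]_n.
Implicit Types (D : set V) (g h : V -> R) (x y z : V).

Lemma le_Mup D g b y z : (forall u, g u <= b) -> D z ->
  g z - lam * sqnorm (z - y) <= Mup D lam g y.
Proof.
move=> g_ub Dz; apply: ub_le_sup; last by exists z.
exists b => _ [u _ <-]; have := sqnorm_ge0 (u - y); have := g_ub u; have := lam_gt0; nra.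
Qed.

Lemma Mup_le D g y c : D !=set0 ->
  (forall z, D z -> g z - lam * sqnorm (z - y) <= c) -> Mup D lam g y <= c.
Proof.
move=> [z0 Dz0] le_c; apply: ge_sup; first by exists (g z0 - lam * sqnorm (z0 - y)), z0.
by move=> _ [z Dz <-]; exact: le_c.
Qed.

Lemma le_Mup_self D g b y : (forall u, g u <= b) -> D y -> g y <= Mup D lam g y.
Proof.
by move=> g_ub Dy; have := le_Mup y g_ub Dy; rewrite subrr sqnorm0 mulr0 subr0.
Qed.

Lemma Mlow_le D g a x y : (forall u, a <= g u) -> D y ->
  Mlow D lam g x <= g y + lam * sqnorm (y - x).
Proof.
move=> g_lb Dy; apply: ge_inf; last by exists y.
exists a => _ [u _ <-]; have := sqnorm_ge0 (u - x); have := g_lb u; have := lam_gt0; nra.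
Qed.

Lemma le_Mlow D g x c : D !=set0 ->
  (forall y, D y -> c <= g y + lam * sqnorm (y - x)) -> c <= Mlow D lam g x.
Proof.
move=> [y0 Dy0] c_le; apply: lb_le_inf; first by exists (g y0 + lam * sqnorm (y0 - x)), y0.
by move=> _ [y Dy <-]; exact: c_le.
Qed.

Lemma eq_Mlow D g h x : (forall y, D y -> g y = h y) -> Mlow D lam g x = Mlow D lam h x.
Proof.
move=> eq_gh; rewrite /Mlow; congr inf.
by apply/seteqP; split=> _ [y Dy <-]; exists y; rewrite ?eq_gh.
Qed.

Lemma convex_quad_sub_Mlow h a : (forall y, a <= h y) ->
  convex_fun (fun u => lam * sqnorm u - Mlow setT lam h u).
Proof.
move=> h_lb x1 x2 t t_ge0 t_le1 /=.
set m := t *: x1 + (1 - t) *: x2.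
suff : lam * sqnorm m - t * (lam * sqnorm x1) - (1 - t) * (lam * sqnorm x2)
        + t * Mlow setT lam h x1 + (1 - t) * Mlow setT lam h x2 <= Mlow setT lam h m by lra.
apply: le_Mlow; first by exists 0.
move=> y _.
have le1 := ler_wpM2l t_ge0 (Mlow_le x1 h_lb (I : setT y)).
have t'_ge0 : 0 <= 1 - t by lra.
have le2 := ler_wpM2l t'_ge0 (Mlow_le x2 h_lb (I : setT y)).
suff E : lam * sqnorm m - t * (lam * sqnorm x1) - (1 - t) * (lam * sqnorm x2)
   + t * (h y + lam * sqnorm (y - x1)) + (1 - t) * (h y + lam * sqnorm (y - x2))
   = h y + lam * sqnorm (y - m) by lra.
by rewrite !sqnormB /m dotDr !dotZr; ring.
Qed.

Section UpperTransform.
Variables (g : V -> R) (a b : R).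
Hypotheses (g_lb : forall y, a <= g y) (g_ub : forall y, g y <= b).

Let w := Mup setT lam g.

Let w_lb y : a <= w y.
Proof. exact: le_trans (g_lb y) (le_Mup_self g_ub (I : setT y)). Qed.

Lemma le_Mlow_Mup x : g x <= Mlow setT lam (Mup setT lam g) x.
Proof.
apply: le_Mlow; first by exists x.
by move=> y _; have := le_Mup y g_ub (I : setT x); rewrite sqnorm_distC; lra.
Qed.

(* The competitor in the infimum is [y = q / (2 lam)], for a subgradient [q] of [phi] at [x]. *)
Lemma convex_le_quad_sub_Mlow_Mup phi x : convex_fun phi ->
  (forall y, phi y <= lam * sqnorm y - g y) ->
  phi x <= lam * sqnorm x - Mlow setT lam (Mup setT lam g) x.
Proof.
move=> phi_convex phi_le.
have [q q_subgrad] := convex_subgradient x phi_convex.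
have lam2_neq0 : 2 * lam != 0 by rewrite mulf_neq0 // gt_eqF.
pose y := (2 * lam)^-1 *: q.
have q_eq : q = (2 * lam) *: y by rewrite /y scalerA mulfV ?scale1r.
suff : w y <= lam * sqnorm x - phi x - lam * sqnorm (y - x).
  by have := Mlow_le x w_lb (I : setT y); rewrite -/w; lra.
apply: Mup_le; first by exists 0.
move=> z _; have := phi_le z; have := q_subgrad (z - x).
rewrite subrKC q_eq dotZl.
suff E : lam * sqnorm z - phi x - 2 * lam * dot y (z - x) - lam * sqnorm (z - y)
   = lam * sqnorm x - phi x - lam * sqnorm (y - x) by lra.
by rewrite !sqnormB dotBr (dotC z y); ring.
Qed.

Lemma Mlow_Mup_Cu x : Mlow setT lam (Mup setT lam g) x = Cu lam g x.
Proof.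
pose Phi u := lam * sqnorm u - Mlow setT lam (Mup setT lam g) u.
have Phi_convex : convex_fun Phi := convex_quad_sub_Mlow w_lb.
have Phi_le y : Phi y <= lam * sqnorm y - g y by have := le_Mlow_Mup y; rewrite /Phi; lra.
suff conv_Phi : conv_env (fun y => lam * sqnorm y - g y) x = Phi x.
  by rewrite /Cu conv_Phi /Phi; ring.
apply/eqP; rewrite eq_le; apply/andP; split.
  apply: ge_sup; first by exists (Phi x), Phi.
  by move=> _ [phi [phi_convex phi_le] <-]; exact: convex_le_quad_sub_Mlow_Mup.
apply: ub_le_sup; last by exists Phi.
by exists (lam * sqnorm x - g x) => _ [phi [_ phi_le] <-]; exact: phi_le.
Qed.

End UpperTransform.

End Envelopes.

Section Indicator.
Variables (R : realType) (n : nat) (lam : R) (K : set 'rV[R]_n).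
Hypothesis lam_gt0 : 0 < lam.
Notation V := 'rV[R]_n.
Implicit Types (D : set V) (y z : V).

Lemma indic_ge0 y : 0 <= \1_K y :> R.
Proof. by rewrite indicE. Qed.

Lemma indic_le1 y : \1_K y <= 1 :> R.
Proof. by rewrite indicE; case: (y \in K). Qed.

Lemma Mup_indic_ge0 D y : D y -> 0 <= Mup D lam \1_K y.
Proof. by move=> Dy; exact: le_trans (indic_ge0 y) (le_Mup_self lam_gt0 indic_le1 Dy). Qed.

Lemma Mup_indic_restrict D y : K `<=` D -> D y ->
  Mup D lam \1_K y = Mup setT lam \1_K y.
Proof.
move=> KD Dy; apply/eqP; rewrite eq_le; apply/andP; split.
  apply: Mup_le; first by exists y.
  by move=> z _; apply: (le_Mup lam_gt0 y indic_le1).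
apply: Mup_le; first by exists y.
move=> z _; have [Kz|nKz] := pselect (K z).
  by apply: (le_Mup lam_gt0 y indic_le1); exact: KD.
rewrite indicE memNset //; apply: le_trans (Mup_indic_ge0 Dy).
by rewrite sub0r oppr_le0 mulr_ge0 ?sqnorm_ge0 ?ltW.
Qed.

Lemma Mup_indic_far z : (forall k, K k -> lam^-1 < sqnorm (k - z)) ->
  Mup setT lam \1_K z = 0.
Proof.
move=> far; apply/eqP; rewrite eq_le Mup_indic_ge0 // andbT.
apply: Mup_le; first by exists z.
move=> k _; have [Kk|nKk] := pselect (K k).
  rewrite indicE mem_set // mulr1n.
  have := far k Kk; rewrite -(ltr_pM2l lam_gt0) mulfV ?gt_eqF //; lra.
by rewrite indicE memNset // sub0r oppr_le0 mulr_ge0 ?sqnorm_ge0 ?ltW.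
Qed.

End Indicator.

Section Boundary.
Variables (R : realType) (n : nat).
Notation V := 'rV[R]_n.
Implicit Types (Om : set V) (x y z : V).

(* The last time [t] at which the path is in [closure Om] lies on the boundary. *)
Lemma path_meets_boundary Om (f : R -> V) : open Om -> continuous f ->
  closure Om (f 0) -> ~ closure Om (f 1) ->
  exists2 t, 0 <= t <= 1 & boundary Om (f t).
Proof.
move=> Om_open f_cont cl0 ncl1.
pose T := [set t : R | 0 <= t <= 1 /\ closure Om (f t)].
have T0 : T 0 by split; rewrite ?lexx ?ler01.
have T_ub : ubound T 1 by move=> t [/andP[_ ->]].
have ts_ge0 : 0 <= sup T by apply: ub_le_sup; [exists 1 | ].
have ts_le1 : sup T <= 1 by apply: ge_sup; [exists 0 | ].
have cl_ts : closure Om (f (sup T)).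
  have cl_pre : closed (f @^-1` closure Om).
    by apply: preimage_closed; [move=> t _; exact: f_cont | exact: closed_closure].
  have : closure T (sup T) by apply: closure_sup; [exists 0 | exists 1].
  by move/(closureS (fun t (Tt : T t) => Tt.2)); rewrite -(closure_id _).1.
exists (sup T); first by rewrite ts_ge0 ts_le1.
split; first exact: cl_ts.
have -> : interior Om = Om by apply/interior_id.
move=> Om_ts.
have ts_lt1 : sup T < 1.
  rewrite lt_neqAle ts_le1 andbT; apply: contra_notN ncl1 => /eqP <-.
  exact: subset_closure.
have : nbhs (sup T) (f @^-1` Om).
  apply: open_nbhs_nbhs; split; last exact: Om_ts.
  by apply: open_comp; [move=> t _; exact: f_cont | exact: Om_open].
move=> /nbhs_ballP[e e_gt0 ball_Om].
pose t' := Num.min (sup T + e / 2) 1.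
have ts_lt_t' : sup T < t' by rewrite lt_min ts_lt1 andbT ltrDl divr_gt0.
have t'_le : t' <= sup T + e / 2 by rewrite ge_min lexx.
suff : t' <= sup T by lra.
apply: ub_le_sup; first by exists 1.
split; first by rewrite (le_trans ts_ge0 (ltW ts_lt_t')) ge_min lexx orbT.
apply: subset_closure; apply: ball_Om.
by rewrite /ball /= ltr_norml; apply/andP; split; lra.
Qed.

Lemma segment_meets_boundary Om x y : open Om -> closure Om x -> ~ closure Om y ->
  exists2 z, boundary Om z & sqnorm (z - x) <= sqnorm (y - x).
Proof.
move=> Om_open clx ncly.
pose f t := x + t *: (y - x).
have f_cont : continuous f.
  by move=> t; apply: cvgD; [exact: cvg_cst | apply: cvgZr_tmp; exact: cvg_id].
have [||t /andP[t_ge0 t_le1] bd_ft] := path_meets_boundary Om_open f_cont.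
- by rewrite /f scale0r addr0.
- by rewrite /f scale1r subrKC.
exists (f t) => //; rewrite /f addrC addKr sqnormZ ler_piMl ?sqnorm_ge0 //.
by rewrite expr_le1.
Qed.

Lemma Mlow_closure Om (lam : R) (h : V -> R) x : open Om -> 0 < lam ->
  (forall y, 0 <= h y) -> (forall z, boundary Om z -> h z = 0) -> closure Om x ->
  Mlow (closure Om) lam h x = Mlow setT lam h x.
Proof.
move=> Om_open lam_gt0 h_ge0 h_bd clx; apply/eqP; rewrite eq_le; apply/andP; split.
  apply: le_Mlow; first by exists x.
  move=> y _; have [cly|ncly] := pselect (closure Om y).
    exact: (Mlow_le lam_gt0 x h_ge0 cly).
  have [z bd_z z_near] := segment_meets_boundary Om_open clx ncly.
  apply: le_trans (Mlow_le lam_gt0 x h_ge0 bd_z.1) _.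
  by rewrite h_bd // add0r; have := h_ge0 y; rewrite -(ler_pM2l lam_gt0) in z_near; lra.
apply: le_Mlow; first by exists x.
by move=> y _; apply: (Mlow_le lam_gt0 x h_ge0).
Qed.

Lemma dist_sets_sqr_lt_sqnorm (K B : set V) (r : R) k z :
  (r%:E < dist_sets K B * dist_sets K B)%E -> K k -> B z -> r < sqnorm (k - z).
Proof.
move=> r_lt Kk Bz.
have d_ge0 : (0 <= dist_sets K B)%E.
  by apply: le_ereal_inf_tmp => _ [k' _ [z' _ <-]]; rewrite lee_fin sqrtr_ge0.
have d_le : (dist_sets K B <= (enorm (k - z))%:E)%E.
  by apply: ereal_inf_lbound; exists k => //; exists z.
move: r_lt d_ge0 d_le; case: (dist_sets K B) => [d| |] //=.
rewrite -EFinM !lte_fin !lee_fin => r_lt d_ge0 d_le.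
rewrite -[sqnorm _]sqr_sqrtr ?sqnorm_ge0 // -/(enorm _) expr2.
by apply: lt_le_trans r_lt _; apply: ler_pM.
Qed.

End Boundary.

Unset Implicit Arguments.

Theorem theorem3p7 (R : realType) (n : nat) (Omega K : set 'rV[R]_n) (lam : R) :
  open Omega -> compact K -> K !=set0 -> K `<=` Omega -> 0 < lam ->
  ((lam^-1)%:E < dist_sets K (boundary Omega) * dist_sets K (boundary Omega))%E ->
  forall x, closure Omega x ->
    [/\ Mup (closure Omega) lam \1_K x = Mup setT lam \1_K x,
        Mlow (closure Omega) lam (Mup (closure Omega) lam \1_K) x
          = Mlow setT lam (Mup setT lam \1_K) x
      & Mlow (closure Omega) lam (Mup (closure Omega) lam \1_K) x
          = Cu lam \1_K x].
Proof.
move=> Om_open _ _ K_Om lam_gt0 far_bd x clx.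
have K_clOm : K `<=` closure Omega by move=> k /K_Om; exact: subset_closure.
have Mup_clOm y : closure Omega y -> Mup (closure Omega) lam \1_K y = Mup setT lam \1_K y.
  exact: Mup_indic_restrict.
have -> : Mlow (closure Omega) lam (Mup (closure Omega) lam \1_K) x
        = Mlow setT lam (Mup setT lam \1_K) x.
  rewrite (eq_Mlow _ _ Mup_clOm) Mlow_closure //.
    by move=> y; exact: Mup_indic_ge0.
  move=> z bd_z; apply: Mup_indic_far => // k Kk.
  exact: dist_sets_sqr_lt_sqnorm far_bd Kk bd_z.
split => //; first exact: Mup_clOm.
exact: (Mlow_Mup_Cu lam_gt0 (@indic_ge0 _ _ K) (@indic_le1 _ _ K)).
Qed.
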